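(* Let $n>2$ be an integer and let $S\subseteq\mathbb{F}_2^n$ be nonempty. Then $$|\Delta(S)|\ \ge\ \frac{\log|S|}{2\log n}.$$
   Context: For $x,y\in\mathbb{F}_2^n$, the Hamming distance is $d_H(x,y)=\#\{i:x_i\neq y_i\}$, and $\Delta(S)=\{d_H(x,y):x,y\in S\}$ (pairs with $x=y$ allowed). Logarithms are to any fixed base greater than 1. *)

From mathcomp Require Import all_boot.
From Stdlib Require Import Reals.
Set Implicit Arguments. Unset Strict Implicit. Unset Printing Implicit Defensive.

Definition F2vec (n : nat) := {ffun 'I_n -> bool}.

Definition hamming (n : nat) (x y : F2vec n) : nat := #|[set i : 'I_n | x i != y i]|.

Definition dist_set (n : nat) (S : {set F2vec n}) : {set 'I_n.+1} :=
  [set (inord (hamming x y) : 'I_n.+1) | x in S, y in S].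

(** Polynomial method.  For [y] in [S] let [f_y(z) = prod_(r in D) (r - d_H(y, z))],
    where [D] is the set of nonzero distances occurring in [S].  On [S], [f_y(z)]
    vanishes exactly when [z <> y], so the matrix [(f_y(z))_(y, z in S)] is diagonal
    and invertible.  Since [d_H(y, z)] is an affine function of the coordinates of [z],
    expanding the product writes every [f_y] in a span of at most [(n+1)^|D|]
    functions of [z]; hence [|S| <= (n+1)^|Delta(S)| <= n^(2 |Delta(S)|)]. *)

From mathcomp Require Import all_boot.
From Stdlib Require Import Reals Lra.
From mathcomp Require all_algebra.

Set Implicit Arguments.
Unset Strict Implicit.
Unset Printing Implicit Defensive.

Lemma hamming_le (n : nat) (x y : F2vec n) : hamming x y <= n.
Proof. by rewrite /hamming -[X in _ <= X]card_ord max_card. Qed.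

Lemma hamming_eq0 (n : nat) (x y : F2vec n) : (hamming x y == 0) = (x == y).
Proof.
rewrite /hamming cards_eq0; apply/eqP/eqP => [xy | ->].
  apply/ffunP => i; apply/eqP/negPn.
  by have := in_set0 i; rewrite -xy inE => ->.
by apply/setP => i; rewrite !inE eqxx.
Qed.

Lemma hamming_in_dist_set (n : nat) (S : {set F2vec n}) (x y : F2vec n) :
  x \in S -> y \in S -> inord (hamming x y) \in dist_set S.
Proof. by move=> xS yS; apply: imset2_f. Qed.

Section PolynomialMethod.
Import all_algebra GRing.Theory Num.Theory.
Local Open Scope ring_scope.

Lemma big_option (R : nmodType) (T : finType) (F : option T -> R) :
  \sum_j F j = F None + \sum_i F (Some i).
Proof.
rewrite (bigD1 None) //=; congr (_ + _).
by rewrite (reindex_omap Some (fun j => j)) //=; [apply: eq_bigl => i; rewrite eqxx | case].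
Qed.

Lemma card_le_of_diagonal_factorization (F : fieldType) (T I : finType)
    (S : {set T}) (c : T -> I -> F) (h : I -> T -> F) :
  (forall y z, y \in S -> z \in S -> (\sum_i c y i * h i z != 0) = (y == z)) ->
  (#|S| <= #|I|)%nat.
Proof.
move=> diagS.
pose A : 'M[F]_#|S| := \matrix_(k, l) \sum_i c (enum_val k) i * h i (enum_val l).
pose C : 'M[F]_(#|S|, #|I|) := \matrix_(k, m) c (enum_val k) (enum_val m).
pose H : 'M[F]_(#|I|, #|S|) := \matrix_(m, l) h (enum_val m) (enum_val l).
have A_CH : A = C *m H.
  apply/matrixP => k l; rewrite !mxE (big_enum_val (fun i => _)) /=.
  by apply: eq_bigr => m _; rewrite !mxE.
have A_diag : A = diag_mx (\row_k A k k).
  apply/matrixP => k l; rewrite !mxE; case: eqVneq => [-> // | kl].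
  apply/eqP; rewrite mulr0n -[_ == 0]negbK diagS ?enum_valP //.
  by apply: contra kl => /eqP/enum_val_inj ->.
have A_unit : A \in unitmx.
  rewrite unitmxE A_diag det_diag unitfE; apply/prodf_neq0 => k _.
  by rewrite !mxE diagS ?enum_valP.
rewrite -(mxrank_unit A_unit) A_CH.
exact: leq_trans (mxrankM_maxl C H) (rank_leq_col C).
Qed.

Section DistancePolynomial.
Context {R : comPzRingType} {n : nat}.

Definition hcoord (z : F2vec n) (j : option 'I_n) : R :=
  if j is Some i then (z i)%:R else 1.

Definition dist_coef (y : F2vec n) (r : nat) (j : option 'I_n) : R :=
  if j is Some i then 2 * (y i)%:R - 1 else r%:R - \sum_i (y i)%:R.

Lemma hamming_affine (y z : F2vec n) (r : nat) :
  r%:R - (hamming y z)%:R = \sum_j dist_coef y r j * hcoord z j.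
Proof.
rewrite big_option /= mulr1 /hamming -sum1_card big_mkcond /= natr_sum.
have -> : \sum_i ((if i \in [set i | y i != z i] then 1%N else 0%N)%:R : R) =
          \sum_i ((y i)%:R - (2 * (y i)%:R - 1) * (z i)%:R).
  apply: eq_bigr => i _; rewrite inE.
  by case: (y i); case: (z i);
    rewrite /= ?mulr0 ?mulr1 ?subr0 ?mul1r ?mulr2n ?addrK ?subrr ?sub0r ?opprK.
by rewrite sumrB opprD opprK addrA.
Qed.

Definition dist_poly (D : {set 'I_n.+1}) (y z : F2vec n) : R :=
  \prod_(r in D) ((r : nat)%:R - (hamming y z)%:R).

Lemma dist_poly_expand (D : {set 'I_n.+1}) (y z : F2vec n) :
  dist_poly D y z =
  \sum_(g : {ffun 'I_#|D| -> option 'I_n})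
     (\prod_(t < #|D|) dist_coef y (enum_val t) (g t)) * \prod_t hcoord z (g t).
Proof.
rewrite /dist_poly big_enum_val /=.
under eq_bigr do rewrite hamming_affine.
by rewrite bigA_distr_bigA /=; apply: eq_bigr => g _; rewrite big_split.
Qed.

End DistancePolynomial.

Lemma dist_poly_neq0 (F : numDomainType) (n : nat) (S : {set F2vec n}) (y z : F2vec n) :
  y \in S -> z \in S -> (dist_poly (dist_set S :\ ord0) y z != 0 :> F) = (y == z).
Proof.
move=> yS zS; rewrite /dist_poly; case: (eqVneq y z) => [<- | yz].
  have /eqP -> : hamming y y == 0%nat by rewrite hamming_eq0.
  apply/prodf_neq0 => r; rewrite !inE => /andP[r0 _].
  by rewrite subr0 pnatr_eq0; apply: contra r0 => /eqP r0; apply/eqP/val_inj.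
have yz_le : (hamming y z < n.+1)%nat by rewrite ltnS hamming_le.
apply/negbTE/negPn/eqP; rewrite (bigD1 (inord (hamming y z))) /=.
  by rewrite inordK // subrr mul0r.
rewrite !inE hamming_in_dist_set // andbT.
have d0 : hamming y z != 0%nat by rewrite hamming_eq0.
by apply: contraTneq d0 => /(congr1 val); rewrite /= inordK // => ->.
Qed.

(* [expn], not [^]: importing Reals rebinds [^] in nat_scope to [Nat.pow]. *)
Lemma card_le_expn_dist_set (n : nat) (S : {set F2vec n}) :
  (#|S| <= expn n.+1 #|dist_set S|)%nat.
Proof.
pose D := dist_set S :\ ord0.
pose c y (g : {ffun 'I_#|D| -> option 'I_n}) : rat :=
  \prod_(t < #|D|) dist_coef y (enum_val t) (g t).
pose h (g : {ffun 'I_#|D| -> option 'I_n}) z : rat := \prod_t hcoord z (g t).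
have diagS y z : y \in S -> z \in S -> (\sum_g c y g * h g z != 0) = (y == z).
  by move=> yS zS; rewrite -dist_poly_expand dist_poly_neq0.
apply: leq_trans (card_le_of_diagonal_factorization diagS) _.
rewrite card_ffun card_option !card_ord leq_pexp2l //.
exact/subset_leq_card/subsetDl.
Qed.

End PolynomialMethod.

Lemma INR_expn (b k : nat) : INR (expn b k) = (INR b ^ k)%R.
Proof. by elim: k => // k IH; rewrite expnS mult_INR IH. Qed.

Lemma ln_INR_le_expn (a b k : nat) :
  (0 < a)%nat -> (1 < b)%nat -> (a <= expn b k)%nat ->
  (ln (INR a) <= INR k * ln (INR b))%R.
Proof.
move=> a_gt0 b_gt1 a_le.
have b_pos : (0 < INR b)%R by apply/lt_0_INR/ltP/ltnW.
rewrite -ln_pow // -INR_expn.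
have [a_lt | ->] := Rle_lt_or_eq_dec _ _ (le_INR _ _ (elimT leP a_le)); last lra.
by apply/Rlt_le/ln_increasing => //; apply/lt_0_INR/ltP.
Qed.

Theorem lemma3p1 (n : nat) (S : {set F2vec n}) :
  (2 < n)%N -> S != set0 ->
  (ln (INR #|S|) / (2 * ln (INR n)) <= INR #|dist_set S|)%R.
Proof.
move=> n_gt2 S_neq0.
have n_gt1 : (1 < n)%nat by apply: ltnW.
have S_gt0 : (0 < #|S|)%nat by rewrite card_gt0.
have card_le : (#|S| <= expn n (2 * #|dist_set S|))%nat.
  rewrite expnM; apply: leq_trans (card_le_expn_dist_set S) _.
  case: #|dist_set S| => [// | d]; rewrite leq_exp2r //.
  by rewrite -mulnn ltn_Pmull // ltnW.
have ln_le := ln_INR_le_expn S_gt0 n_gt1 card_le.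
rewrite mult_INR in ln_le.
have ln_n_pos : (0 < ln (INR n))%R.
  by rewrite -ln_1; apply: ln_increasing; [lra | apply/lt_1_INR/ltP].
apply: (Rmult_le_reg_r (2 * ln (INR n))); first lra.
rewrite /Rdiv Rmult_assoc Rinv_l; simpl INR in ln_le |- *; lra.
Qed.
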